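(* Let $T$ be a rooted binary tree whose leaves are each coloured black or white, with the colouring extended to all nodes as described in the context, and assume that $T$ contains more than one maximal black subtree. If there exists an SPR operation $(u,v)$ on $T$ whose resulting tree contains at most one maximal black subtree (i.e. the resulting tree is compatible with the data), then that operation belongs to one of the classes $(\mathrm{B},\mathrm{r},\mathrm{B},\ast)$, $(\mathrm{W},\mathrm{r},\mathrm{W},\ast)$, $(\mathrm{W},\mathrm{r},\mathrm{G},\ast)$ or $(\mathrm{W},\mathrm{r},\mathrm{B},\mathrm{r})$.
   Context: All trees are rooted binary trees; every non-leaf node has exactly two children and every non-root node $n$ has a parent $\mathrm{pa}(n)$. A ''subtree'' always means a node together with all of its descendants (so its leaves are leaves of the original tree). Colouring: each leaf is coloured black (B) or white (W) (in the application, black iff the corresponding observed sequence carries allele 1 at the next segregating site). The colouring is extended recursively to all nodes: an internal node is black if both children are black, white if both children are white, and grey (G) otherwise. A subtree is black (resp. white) if all its nodes are black (resp. white); it is maximal if no strictly larger subtree containing it is black (resp. white). Classification: a black or white node is of type ''r'' (subtree root) if it is the root of a maximal subtree of its own colour, and of type ''b'' (branch) otherwise; all grey nodes are of type ''b'' by convention. A tree is called compatible (with the data) if it contains at most one maximal black subtree. SPR operation $(u,v)$ on $T$: $u$ is a non-root node, $v$ is a node of $T$ with $v\notin\{u,\mathrm{pa}(u)\}$ and $v$ not a descendant of $u$; the subtree rooted at $u$ is pruned (the edge to $u$ is removed and $\mathrm{pa}(u)$ is deleted, its other child taking its place), and then regrafted onto the branch above $v$: a new node is inserted on the edge from $v$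 to its parent (or as a new root above $v$ if $v$ is the root) whose two children are $v$ and $u$. Colours of the resulting tree are recomputed by the same rule. The SPR operation $(u,v)$ belongs to the equivalence class $(x,y,z,w)$ where $x,z\in\{\mathrm{B},\mathrm{W},\mathrm{G}\}$ are the colours in $T$ of the pruned node $u$ and regrafting node $v$, and $y,w\in\{\mathrm{r},\mathrm{b}\}$ are their respective classifications in $T$; $\ast$ is a wildcard standing for any value. *)

From HB Require Import structures.
From mathcomp Require Import all_boot.
Set Implicit Arguments. Unset Strict Implicit. Unset Printing Implicit Defensive.

(* Rooted binary trees; leaves carry a colour: true = black, false = white. *)
Inductive tree := Leaf of bool | Node of tree & tree.

Inductive col := B | W | G.
Definition col_eqb (x y : col) : bool :=
  match x, y with B, B | W, W | G, G => true | _, _ => false end.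
Lemma col_eqP : Equality.axiom col_eqb.
Proof. by case; case; constructor. Qed.
HB.instance Definition _ := hasDecEq.Build col col_eqP.

Fixpoint colour (t : tree) : col :=
  match t with
  | Leaf b => if b then B else W
  | Node l r => let cl := colour l in let cr := colour r in
      if cl == cr then cl else G
  end.

(* Nodes are addressed by paths from the root (false = left, true = right). *)
Fixpoint subt (t : tree) (p : seq bool) : option tree :=
  match p, t with
  | [::], _ => Some t
  | b :: p', Node l r => subt (if b then r else l) p'
  | _ :: _, Leaf _ => None
  end.

Definition is_node (t : tree) (p : seq bool) : bool := isSome (subt t p).

Definition subtree_at (t : tree) (p : seq bool) : tree :=
  if subt t p is Some s then s else t.

Definition colour_at (t : tree) (p : seq bool) : col := colour (subtree_at t p).

Definition parent (p : seq bool) : seq bool := take (size p).-1 p.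

Definition desc (q p : seq bool) : bool := take (size p) q == p.

Fixpoint nodes (t : tree) : seq (seq bool) :=
  [::] :: match t with
          | Leaf _ => [::]
          | Node l r => map (cons false) (nodes l) ++ map (cons true) (nodes r)
          end.

(* Type "r": a black/white node that is the root of a maximal subtree of its
   colour, i.e. it is the root or its parent has a different colour. *)
Definition is_r (t : tree) (p : seq bool) : bool :=
  (colour_at t p != G) &&
  ((p == [::]) || (colour_at t (parent p) != colour_at t p)).

(* Number of maximal black subtrees = number of black nodes of type r. *)
Definition num_max_black (t : tree) : nat :=
  count (fun p => (colour_at t p == B) && is_r t p) (nodes t).

Definition compatible (t : tree) : Prop := num_max_black t <= 1.

(* Pruning the subtree at u (u non-root): parent of u is replaced by the sibling. *)
Fixpoint prune (t : tree) (u : seq bool) : tree :=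
  match t, u with
  | Node l r, [:: b] => if b then l else r
  | Node l r, b :: u' => if b then Node l (prune r u') else Node (prune l u') r
  | _, _ => t
  end.

(* Regrafting s onto the branch above the node at path q:
   a new node with children (subtree at q) and s replaces the subtree at q. *)
Fixpoint graft (t : tree) (q : seq bool) (s : tree) : tree :=
  match q, t with
  | [::], _ => Node t s
  | b :: q', Node l r => if b then Node l (graft r q' s) else Node (graft l q' s) r
  | _ :: _, Leaf _ => t
  end.

(* Path of node v of T inside the pruned tree (v not in subtree of u, v <> pa(u)). *)
Definition moved_path (u v : seq bool) : seq bool :=
  let sib := rcons (parent u) (~~ last false u) in
  if desc v sib then parent u ++ drop (size sib) v else v.

Definition spr_ok (t : tree) (u v : seq bool) : bool :=
  [&& u != [::], is_node t u, is_node t v, v != u, v != parent u & ~~ desc v u].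

Definition spr (t : tree) (u v : seq bool) : tree :=
  graft (prune t u) (moved_path u v) (subtree_at t u).

From mathcomp Require Import all_boot.

Set Implicit Arguments.
Unset Strict Implicit.
Unset Printing Implicit Defensive.

(* Let N(t) be the number of maximal black subtrees of t: a black node counts
   1, any other node the sum over its two children.  If C is a tree with a
   hole, N(C[s]) = N(C[black leaf]) when s is black and N(s) + N(C[white leaf])
   otherwise.  Write the tree as C[Node X S], where S is the pruned subtree and
   X its sibling, so that the pruned tree is C[X] = D[V] and the result of the
   SPR move is D[Node V S].
   - If S has the colour of its parent (u is not of type r), pruning does not
     change N and regrafting never decreases it.
   - If S is grey, N(D[Node V S]) >= N(C[X]) + N(S) >= 2.
   - If S is black, u is of type r and V is not black, then
     N(D[Node V S]) = N(C[X]) + 1 = N(C[Node X S]).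
   - If S is white and V is black but not of type r, the parent of V is black,
     and regrafting S above V splits it into the two black subtrees V and its
     sibling.
   In each case the result has at least two maximal black subtrees. *)

(** * Counting maximal black subtrees *)

Fixpoint nmax_black (t : tree) : nat :=
  match t with
  | Leaf b => b
  | Node l r =>
      if (colour l == B) && (colour r == B) then 1
      else nmax_black l + nmax_black r
  end.

Lemma colour_nodeB l r :
  (colour (Node l r) == B) = (colour l == B) && (colour r == B).
Proof. by rewrite /=; case: (colour l); case: (colour r). Qed.

Lemma colour_nodeC l r : colour (Node l r) = colour (Node r l).
Proof. by rewrite /=; case: (colour l); case: (colour r). Qed.

Lemma nmax_black_nodeC l r : nmax_black (Node l r) = nmax_black (Node r l).
Proof. by rewrite /= andbC addnC. Qed.

Lemma nmax_black_node l r : colour (Node l r) != B ->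
  nmax_black (Node l r) = nmax_black l + nmax_black r.
Proof. by rewrite colour_nodeB /= => /negbTE ->. Qed.

Lemma nmax_black_black t : colour t = B -> nmax_black t = 1.
Proof.
by case: t => [[]|l r] //= /eqP; rewrite -/(colour (Node l r)) colour_nodeB => ->.
Qed.

Lemma nmax_black_white t : colour t = W -> nmax_black t = 0.
Proof.
elim: t => [[]|l IHl r IHr] //=.
by case El: (colour l); case Er: (colour r) => //= _; rewrite IHl ?IHr.
Qed.

Lemma nmax_black_grey t : colour t = G -> 0 < nmax_black t.
Proof.
elim: t => [[]|l IHl r IHr] // E.
rewrite nmax_black_node ?E // addn_gt0; move: E => /=.
case El: (colour l); case Er: (colour r) => //= _.
all: first [ by rewrite (nmax_black_black El)
           | by rewrite (nmax_black_black Er) orbT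
           | by rewrite (IHl El)
           | by rewrite (IHr Er) orbT ].
Qed.

Lemma nmax_black_same_colour s s' : colour s = colour s' -> colour s != G ->
  nmax_black s = nmax_black s'.
Proof.
case Es: (colour s) => E // _.
- by rewrite !nmax_black_black.
- by rewrite !nmax_black_white.
Qed.

Lemma subt_nil t : subt t [::] = Some t.
Proof. by case: t. Qed.

Lemma subt_cat t p w :
  subt t (p ++ w) = if subt t p is Some s then subt s w else None.
Proof. by elim: p t => [|a p IH] [b|l r] //=; case: a. Qed.

Lemma subt_rcons t p c : subt t (rcons p c) =
  if subt t p is Some (Node l r) then Some (if c then r else l) else None.
Proof.
rewrite -cats1 subt_cat; case: (subt t p) => [[b|l r]|] //=.
by case: c; rewrite subt_nil.
Qed.

Lemma is_node_rcons t p c :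
  is_node t (rcons p c) -> exists l r, subt t p = Some (Node l r).
Proof.
by rewrite /is_node subt_rcons; case: (subt t p) => [[b|l r]|] // _; exists l, r.
Qed.

Lemma colour_at_subt t p s : subt t p = Some s -> colour_at t p = colour s.
Proof. by rewrite /colour_at /subtree_at => ->. Qed.

Lemma colour_at_nil t : colour_at t [::] = colour t.
Proof. by rewrite /colour_at /subtree_at subt_nil. Qed.

Lemma colour_at_cons l r (a : bool) p : is_node (if a then r else l) p ->
  colour_at (Node l r) (a :: p) = colour_at (if a then r else l) p.
Proof. by rewrite /colour_at /subtree_at /is_node /=; case: (subt _ p). Qed.

Lemma parent_rcons (p : seq bool) c : parent (rcons p c) = p.
Proof. by rewrite /parent size_rcons -cats1 take_size_cat. Qed.

Lemma is_r_rcons t p c : is_r t (rcons p c) =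
  (colour_at t (rcons p c) != G) && (colour_at t p != colour_at t (rcons p c)).
Proof. by rewrite /is_r parent_rcons; case: p. Qed.

Definition is_black_r (t : tree) (p : seq bool) : bool :=
  (colour_at t p == B) && is_r t p.

Lemma is_black_r_cons l r (a : bool) p :
  p != [::] -> is_node (if a then r else l) p ->
  is_black_r (Node l r) (a :: p) = is_black_r (if a then r else l) p.
Proof.
case/lastP: p => [//|p c] _ hpc.
have [l' [r' E]] := is_node_rcons hpc.
have hp : is_node (if a then r else l) p by rewrite /is_node E.
by rewrite /is_black_r -rcons_cons !is_r_rcons !colour_at_cons.
Qed.

Lemma nodes_is_node t p : p \in nodes t -> is_node t p.
Proof.
elim: t p => [b|l IHl r IHr] p /=; first by rewrite inE => /eqP ->.
rewrite inE mem_cat => /predU1P[-> //|/orP[] /mapP[q hq ->]];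
  [exact: IHl | exact: IHr].
Qed.

Lemma nil_notin_behead_nodes t : [::] \notin behead (nodes t).
Proof.
case: t => [b|l r] //=; rewrite mem_cat.
by apply/norP; split; apply/mapP => -[].
Qed.

Lemma num_max_black_child l r (a : bool) :
  count (is_black_r (Node l r)) (map (cons a) (nodes (if a then r else l)))
    + ((colour (if a then r else l) == B) && (colour (Node l r) == B))
  = num_max_black (if a then r else l).
Proof.
set c := if a then r else l.
have Ec : nodes c = [::] :: behead (nodes c) by case: (c).
rewrite /num_max_black Ec /= count_map -/(colour (Node l r)).
have -> : count (preim (cons a) (is_black_r (Node l r))) (behead (nodes c)) =
          count (is_black_r c) (behead (nodes c)).
  apply: eq_in_count => p hp /=; apply: is_black_r_cons.
  - by apply: contraNneq (nil_notin_behead_nodes c) => <-.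
  - by apply: nodes_is_node; rewrite Ec inE hp orbT.
rewrite addnAC; congr (_ + _).
have hc : is_node c [::] by rewrite /is_node subt_nil.
rewrite /is_black_r -[[:: a]]/(rcons [::] a) is_r_rcons colour_at_cons //.
rewrite /is_r eqxx orTb andbT !colour_at_nil -/c.
by move: (colour c) (colour (Node l r)) => [] [].
Qed.

Lemma num_max_blackE t : num_max_black t = nmax_black t.
Proof.
elim: t => [[]|l IHl r IHr] //.
have := num_max_black_child l r true; have := num_max_black_child l r false.
rewrite IHl IHr /= -!/(colour (Node l r)) => El Er.
rewrite /num_max_black /= count_cat -/(is_black_r (Node l r)).
rewrite /is_r eqxx orTb andbT colour_at_nil -!/(colour (Node l r)).
rewrite -/(nmax_black (Node l r)).
have [NB|NB] := eqVneq (colour (Node l r)) B.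
- move/eqP: (NB); rewrite colour_nodeB => /andP[/eqP lB /eqP rB].
  move: El Er; rewrite NB lB rB !nmax_black_black // eqxx.
  by rewrite !addn1 => -[->] -[->].
- by rewrite nmax_black_node // -El -Er (negbTE NB) !andbF !addn0.
Qed.

(** * Subtrees in context *)

Fixpoint repl (t : tree) (p : seq bool) (s : tree) {struct p} : tree :=
  match p, t with
  | [::], _ => s
  | b :: p', Node l r =>
      if b then Node l (repl r p' s) else Node (repl l p' s) r
  | _ :: _, Leaf _ => t
  end.

Lemma colour_repl t p s s' : is_node t p -> colour s = colour s' ->
  colour (repl t p s) = colour (repl t p s').
Proof. by elim: p t => [|[] p IH] [c|l r] //= hp E; rewrite (IH _ hp E). Qed.

Lemma colour_repl_nonblack t p s : is_node t p -> colour s != B ->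
  colour (repl t p s) != B.
Proof.
elim: p t => [|[] p IH] [c|l r] //= hp E;
  by rewrite -/(colour (Node _ _)) colour_nodeB (negbTE (IH _ hp E)) ?andbF.
Qed.

Lemma nmax_black_repl t p s : is_node t p -> nmax_black (repl t p s) =
  if colour s == B then nmax_black (repl t p (Leaf true))
  else nmax_black s + nmax_black (repl t p (Leaf false)).
Proof.
elim: p t => [|c p IH] t hp /=.
  by case: eqP => [/nmax_black_black ->|]; rewrite ?addn0.
case: t hp => [//|l r]; have [sB|sB] := eqVneq (colour s) B.
  case: c; rewrite /is_node /= => hp;
    by rewrite !IH // sB eqxx (colour_repl (s' := Leaf true) hp sB).
have nW q t : is_node t q -> colour (repl t q (Leaf false)) == B = false.
  by move=> hq; apply/negbTE/colour_repl_nonblack.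
case: c; rewrite /is_node /= => hp;
  rewrite !IH // (negbTE sB) (negbTE (colour_repl_nonblack hp sB)) nW //.
- by rewrite !andbF addnCA.
- by rewrite addnA.
Qed.

Lemma nmax_black_repl_black_le t p : is_node t p ->
  nmax_black (repl t p (Leaf true)) <= (nmax_black (repl t p (Leaf false))).+1.
Proof.
elim: p t => [|c p IH] [b|l r] //= hp.
have nW q t : is_node t q -> colour (repl t q (Leaf false)) == B = false.
  by move=> hq; apply/negbTE/colour_repl_nonblack.
case: c hp => /= hp; rewrite nW //= ?andbF; case: ifP => _ //.
- by rewrite -addnS leq_add2l (IH r).
- by rewrite -addSn leq_add2r (IH l).
Qed.

Lemma nmax_black_repl_black_gt0 t p : is_node t p ->
  0 < nmax_black (repl t p (Leaf true)).
Proof.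
elim: p t => [|c p IH] [b|l r] //= hp.
case: c hp; rewrite /is_node /= => hp; case: ifP => _ //; rewrite addn_gt0.
- by rewrite (IH r hp) orbT.
- by rewrite (IH l hp).
Qed.

Section Context.

Variables (t : tree) (p : seq bool).
Hypothesis hp : is_node t p.

Lemma nmax_black_repl_congr s s' :
  colour s = colour s' -> nmax_black s = nmax_black s' ->
  nmax_black (repl t p s) = nmax_black (repl t p s').
Proof.
by move=> Ec En; rewrite (nmax_black_repl s) // (nmax_black_repl s') // Ec En.
Qed.

Lemma nmax_black_le_repl s :
  colour s != B -> nmax_black s <= nmax_black (repl t p s).
Proof. by move=> sB; rewrite nmax_black_repl // (negbTE sB) leq_addr. Qed.

Lemma nmax_black_repl_le s :
  nmax_black (repl t p s) <= nmax_black s + nmax_black (repl t p (Leaf false)).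
Proof.
rewrite nmax_black_repl //; case: eqP => [/nmax_black_black ->|_] //.
exact: nmax_black_repl_black_le.
Qed.

Lemma nmax_black_repl_node V S : colour V != B ->
  nmax_black (repl t p (Node V S)) = nmax_black (repl t p V) + nmax_black S.
Proof.
move=> VB; have NB : colour (Node V S) != B by rewrite colour_nodeB (negbTE VB).
rewrite (nmax_black_repl V) // (nmax_black_repl (Node V S)) //.
by rewrite (negbTE VB) (negbTE NB) nmax_black_node // addnAC.
Qed.

Lemma nmax_black_repl_node_ge V S : colour S != B ->
  nmax_black (repl t p V) + nmax_black S <= nmax_black (repl t p (Node V S)).
Proof.
move=> SB.
have NB : colour (Node V S) != B by rewrite colour_nodeB (negbTE SB) andbF.
rewrite [X in _ <= X]nmax_black_repl // (negbTE NB) nmax_black_node //.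
by rewrite addnAC leq_add2r nmax_black_repl_le.
Qed.

Lemma nmax_black_repl_node_mono V S :
  nmax_black (repl t p V) <= nmax_black (repl t p (Node V S)).
Proof.
have [SB|SB] := eqVneq (colour S) B; last first.
  by apply: leq_trans (nmax_black_repl_node_ge _ SB); apply: leq_addr.
have [VB|VB] := eqVneq (colour V) B; last by rewrite nmax_black_repl_node ?leq_addr.
rewrite (@nmax_black_repl_congr (Node V S) V) //=; first by rewrite VB SB.
by rewrite (nmax_black_black VB) VB SB.
Qed.

End Context.

Lemma subt_black t w s : colour t = B -> subt t w = Some s -> colour s = B.
Proof.
elim: w t => [|a w IH] t; first by rewrite subt_nil => tB [<-].
case: t => [//|l r] /eqP; rewrite colour_nodeB => /andP[/eqP lB /eqP rB].
by case: a; apply: IH.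
Qed.

Lemma repl_subt t p s : subt t p = Some s -> repl t p s = t.
Proof.
elim: p t => [|a p IH] t; first by rewrite subt_nil => -[->].
by case: t => [//|l r]; case: a => /IH /= ->.
Qed.

Lemma subt_repl_cat t p s w :
  is_node t p -> subt (repl t p s) (p ++ w) = subt s w.
Proof. by elim: p t => [|a p IH] [b|l r] //=; case: a => /IH. Qed.

Lemma repl_cat t p w s V :
  subt t p = Some V -> repl t (p ++ w) s = repl t p (repl V w s).
Proof.
elim: p t => [|a p IH] t; first by rewrite subt_nil => -[<-]; case: w.
by case: t => [//|l r]; case: a => /IH /= ->.
Qed.

Lemma repl_rcons t p c s l r : subt t p = Some (Node l r) ->
  repl t (rcons p c) s = repl t p (if c then Node l s else Node s r).
Proof. by move=> E; rewrite -cats1 (repl_cat _ _ E); case: c. Qed.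

Lemma subt_repl_disj t p q s : ~~ prefix q p -> ~~ prefix p q ->
  subt (repl t p s) q = subt t q.
Proof.
elim: p t q => [|a p IH] t [|c q] //=; rewrite ?prefix0s //.
by case: t => [b|l r] //=; case: a; case: c => //= H1 H2; exact: IH.
Qed.

Lemma prune_rcons t p b l r : subt t p = Some (Node l r) ->
  prune t (rcons p b) = repl t p (if b then l else r).
Proof.
elim: p t => [|a p IH] t; first by rewrite subt_nil => -[->]; case: b.
case: t => [//|L R] E; have := IH _ E.
have : 0 < size (rcons p b) by rewrite size_rcons.
by case: a E => /= _; case: (rcons p b) => [//|y ys] _ ->.
Qed.

Lemma graft_subt t q s V :
  subt t q = Some V -> graft t q s = repl t q (Node V s).
Proof.
elim: q t => [|a q IH] t; first by rewrite subt_nil => -[<-]; case: t.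
by case: t => [//|l r]; case: a => /IH /= ->.
Qed.

(** * Pruning and regrafting *)

Section Regraft.

(* The tree before the move is [repl t p (Node X S)]; pruning [S] leaves
   [repl t p X], in which [S] is regrafted above the subtree [V] at [q]. *)
Variables (t : tree) (p : seq bool) (X S : tree) (q : seq bool) (V : tree).
Hypotheses (hp : is_node t p) (hV : subt (repl t p X) q = Some V).

Let hq : is_node (repl t p X) q. Proof. by rewrite /is_node hV. Qed.

Lemma nmax_black_regraft_same_colour : colour X = colour S -> colour S != G ->
  nmax_black (repl t p (Node X S)) <= nmax_black (repl (repl t p X) q (Node V S)).
Proof.
move=> XS SG; have NX : colour (Node X S) = colour X by rewrite /= XS eqxx.
rewrite (nmax_black_repl_congr hp NX); last first.
  by apply: nmax_black_same_colour; rewrite NX XS.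
by rewrite -{1}(repl_subt hV); apply: nmax_black_repl_node_mono.
Qed.

Lemma nmax_black_regraft_black :
  colour S = B -> colour X != B -> colour V != B ->
  nmax_black (repl (repl t p X) q (Node V S)) = nmax_black (repl t p (Node X S)).
Proof. by move=> SB XB VB; rewrite !nmax_black_repl_node // (repl_subt hV). Qed.

Lemma nmax_black_regraft_grey :
  colour S = G -> 1 < nmax_black (repl t p (Node X S)) ->
  1 < nmax_black (repl (repl t p X) q (Node V S)).
Proof.
move=> SG many; have SB : colour S != B by rewrite SG.
apply: leq_trans _ (nmax_black_repl_node_ge hq V SB); rewrite (repl_subt hV).
have [XB|XB] := eqVneq (colour X) B; last by rewrite -nmax_black_repl_node.
apply: (@leq_add 1 1); last exact: nmax_black_grey.
by rewrite nmax_black_repl // XB eqxx nmax_black_repl_black_gt0.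
Qed.

End Regraft.

Lemma nmax_black_graft_below_black t q c l r S :
  subt t q = Some (Node l r) -> colour (Node l r) = B -> colour S != B ->
  1 < nmax_black (repl t (rcons q c) (Node (if c then r else l) S)).
Proof.
move=> E /eqP; rewrite colour_nodeB => /andP[/eqP lB /eqP rB] SB.
have hq : is_node t q by rewrite /is_node E.
have xS x : colour (Node x S) != B by rewrite colour_nodeB (negbTE SB) andbF.
rewrite (repl_rcons _ _ E); case: c.
- have N : colour (Node l (Node r S)) != B.
    by rewrite colour_nodeB (negbTE (xS r)) andbF.
  apply: leq_trans _ (nmax_black_le_repl hq N).
  rewrite (nmax_black_node N) (nmax_black_node (xS r)).
  by rewrite (nmax_black_black lB) (nmax_black_black rB).
- have N : colour (Node (Node l S) r) != B by rewrite colour_nodeB (negbTE (xS l)).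
  apply: leq_trans _ (nmax_black_le_repl hq N).
  rewrite (nmax_black_node N) (nmax_black_node (xS l)).
  by rewrite (nmax_black_black lB) (nmax_black_black rB) addn1.
Qed.

Lemma prefix_rconsP (A : eqType) (s q : seq A) c :
  prefix s (rcons q c) -> s = rcons q c \/ prefix s q.
Proof.
elim: q s => [|x q IH] [|y s] //=; try by right.
- by case: s => [|z s] /=; [rewrite andbT => /eqP ->; left | rewrite andbF].
- by case/andP=> /eqP -> /IH [->|h]; [left | right; rewrite eqxx].
Qed.

Lemma prefix_rcons_ext (A : eqType) (p q : seq A) :
  prefix p q -> ~~ prefix q p -> exists c, prefix (rcons p c) q.
Proof.
case/prefixP=> [[|c w] ->]; first by rewrite cats0 prefix_refl.
by exists c; rewrite -cat_rcons prefix_prefix.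
Qed.

Lemma desc_prefix q p : desc q p = prefix p q.
Proof. by rewrite /desc prefixE. Qed.

Lemma moved_path_rcons p b q : moved_path (rcons p b) q =
  if prefix (rcons p (~~ b)) q then p ++ drop (size p).+1 q else q.
Proof.
by rewrite /moved_path parent_rcons last_rcons /desc -prefixE size_rcons.
Qed.

Section Prune.

Variables (T : tree) (pp : seq bool) (b : bool) (l r : tree).
Hypothesis hE : subt T pp = Some (Node l r).

Local Notation u := (rcons pp b).
Local Notation S := (if b then r else l).
Local Notation X := (if b then l else r).
Local Notation T' := (repl T pp X).

Let hpp : is_node T pp. Proof. by rewrite /is_node hE. Qed.

Lemma subtree_at_child : subtree_at T u = S.
Proof. by rewrite /subtree_at subt_rcons hE. Qed.

Lemma colour_at_child : colour_at T u = colour S.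
Proof. by rewrite /colour_at subtree_at_child. Qed.

Lemma is_r_child : is_r T u = (colour S != G) && (colour X != colour S).
Proof.
rewrite is_r_rcons colour_at_child (colour_at_subt hE).
by case: b => /=; case: (colour l); case: (colour r).
Qed.

Lemma nmax_black_sibling_first : nmax_black T = nmax_black (repl T pp (Node X S)).
Proof.
rewrite -{1}(repl_subt hE); apply: nmax_black_repl_congr => //.
  by case: b; rewrite // colour_nodeC.
by case: b; rewrite // nmax_black_nodeC.
Qed.

Lemma moved_path_above q : prefix q pp -> moved_path u q = q.
Proof.
move=> qpp; rewrite moved_path_rcons; case: ifP => // /size_prefix.
by rewrite size_rcons => /leq_trans/(_ (size_prefix qpp)); rewrite ltnn.
Qed.

Lemma subt_moved_path q : ~~ prefix q pp -> ~~ prefix u q ->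
  subt T' (moved_path u q) = subt T q.
Proof.
move=> nqp nuq; rewrite moved_path_rcons.
case: (boolP (prefix (rcons pp (~~ b)) q)) => [/prefixP[w ->]|nsq].
  rewrite drop_size_cat ?size_rcons // subt_repl_cat // cat_rcons subt_cat hE.
  by case: b.
rewrite subt_repl_disj //; apply/negP => /prefix_rcons_ext /(_ nqp) [[] ext].
all: by case: b nuq nsq; rewrite ext.
Qed.

Lemma moved_path_rcons_off q c : ~~ prefix q pp ->
  moved_path u (rcons q c) = rcons (moved_path u q) c.
Proof.
move=> nqp; rewrite !moved_path_rcons.
have [sq|nsq] := boolP (prefix (rcons pp (~~ b)) q).
  rewrite (prefix_trans sq (prefix_rcons q c)) drop_rcons ?rcons_cat //.
  by rewrite -(size_rcons pp (~~ b)) size_prefix.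
case: ifP => // /prefix_rconsP [/rcons_inj [qp _]|sq]; last by rewrite sq in nsq.
by rewrite qp prefix_refl in nqp.
Qed.

Lemma spr_as_regraft v : spr_ok T u v -> exists q V,
  [/\ subt T' q = Some V, spr T u v = repl T' q (Node V S)
    & colour X != B -> colour_at T v != B -> colour V != B].
Proof.
case/and5P=> _ _ hv _ /andP[_]; rewrite desc_prefix => nuv.
have [V0 EV0] : exists V0, subt T v = Some V0.
  by move: hv; rewrite /is_node; case: (subt T v) => [V0|] // _; exists V0.
rewrite /spr subtree_at_child (prune_rcons _ hE).
have [vpp|nvpp] := boolP (prefix v pp); last first.
  have EV := subt_moved_path nvpp nuv; rewrite EV0 in EV.
  exists (moved_path u v), V0.
  by rewrite (graft_subt _ EV) (colour_at_subt EV0).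
have [w Ew] := prefixP vpp.
have hw : subt V0 w = Some (Node l r) by move: hE; rewrite Ew subt_cat EV0.
have EV : subt T' v = Some (repl V0 w X).
  by rewrite Ew (repl_cat _ _ EV0) -[v in subt _ v]cats0 subt_repl_cat
    ?subt_nil // /is_node EV0.
exists v, (repl V0 w X); rewrite (moved_path_above vpp) (graft_subt _ EV).
by split=> // XB _; apply: colour_repl_nonblack; rewrite // /is_node hw.
Qed.

Lemma nmax_black_spr_below_black v : spr_ok T u v -> colour S != B ->
  colour_at T v = B -> ~~ is_r T v -> 1 < nmax_black (spr T u v).
Proof.
case/and5P=> _ _ hv _ /andP[_]; rewrite desc_prefix => nuv SB.
case/lastP: v hv nuv => [|q c] hv nuv vB; first by rewrite /is_r vB.
rewrite is_r_rcons vB /= negbK => /eqP qB.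
have [l' [r' Eq]] := is_node_rcons hv.
rewrite (colour_at_subt Eq) in qB.
have nqp : ~~ prefix q pp.
  apply/negP => /prefixP[w Ew]; have := hE.
  rewrite Ew subt_cat Eq => /(subt_black qB) /eqP; rewrite colour_nodeB.
  by case: b SB => /negbTE ->; rewrite ?andbF.
have nuq : ~~ prefix u q.
  by apply: contra nuv => /prefix_trans; apply; apply: prefix_rcons.
have Eq' := subt_moved_path nqp nuq; rewrite Eq in Eq'.
have EV : subt T' (rcons (moved_path u q) c) = Some (if c then r' else l').
  by rewrite subt_rcons Eq'.
rewrite /spr subtree_at_child (prune_rcons _ hE) (moved_path_rcons_off _ nqp).
by rewrite (graft_subt _ EV) (nmax_black_graft_below_black _ Eq' qB SB).
Qed.

End Prune.

Theorem theorem1 (T : tree) (u v : seq bool) :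
  1 < num_max_black T ->
  spr_ok T u v ->
  compatible (spr T u v) ->
  [\/ colour_at T u = B /\ is_r T u /\ colour_at T v = B,
      colour_at T u = W /\ is_r T u /\ colour_at T v = W,
      colour_at T u = W /\ is_r T u /\ colour_at T v = G
    | colour_at T u = W /\ is_r T u /\ colour_at T v = B /\ is_r T v].
Proof.
case/lastP: u => [_ /andP[]//|pp b].
rewrite /compatible !num_max_blackE => many ok; rewrite leqNgt => /negP compat.
have /and3P[_ /is_node_rcons[l [r hE]] _] := ok.
have below := nmax_black_spr_below_black hE ok.
have [q [V [hV hR hVB]]] := spr_as_regraft hE ok.
rewrite hR in below compat; rewrite (nmax_black_sibling_first b hE) in many.
rewrite (colour_at_child b hE) (is_r_child b hE).
have hpp : is_node T pp by rewrite /is_node hE.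
set S := if b then r else l; set X := if b then l else r.
have [SG|SG] := eqVneq (colour S) G.
  by case: compat; apply: nmax_black_regraft_grey.
have [XS|XS] := eqVneq (colour X) (colour S).
  by case: compat; apply: leq_trans many _; apply: nmax_black_regraft_same_colour.
case ES: (colour S) SG XS => // _ XS.
- have [vB|vB] := eqVneq (colour_at T v) B; first by apply: Or41.
  by case: compat; rewrite (nmax_black_regraft_black hpp hV ES XS (hVB XS vB)).
- case EV: (colour_at T v); [|by apply: Or42|by apply: Or43].
  case Vr: (is_r T v); first by apply: Or44.
  by case: compat; apply: below; rewrite ?ES ?Vr.
Qed.
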